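(* Let $p\ge1$ be an integer, $q>1$ and $\alpha\in\mathbb R$. There exists a continuous function $\rho_0:\mathrm{HT}(p,q)\to(0,\infty)$ with the following properties: $\rho_0\in\mathcal C^\infty(\mathrm{HT})$; for every vertex $v$ and every $x\in\mathbb R$, the function $y\mapsto\partial_y\rho_0(x+iy,v)$ has compact support in $(q^{\mathfrak h(v)-1},q^{\mathfrak h(v)})$; $\rho_0$ tends to infinity at infinity; and the functions $|\nabla\rho_0|=y\bigl(|\partial_x\rho_0|^2+|\partial_y\rho_0|^2\bigr)^{1/2}$ and $|\mathcal A_\alpha\rho_0|$, where $\mathcal A_\alpha=y^2(\partial_x^2+\partial_y^2)+\alpha y\partial_y$ on each open strip, are bounded on $\mathrm{HT}^o$. (That is, $\rho_0$ is a strip-adapted exhaustion function for $\mathrm{HT}(p,q)$ equipped with $\phi_e(s)=s^{-2}$, $\psi_e(s)=s^\alpha$.)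
   Context: Treebolic space. Let $T^0$ be the vertex set of the homogeneous tree in which every vertex has $p+1$ neighbours; fix an end $\omega$ and let $\mathfrak h:T^0\to\mathbb Z$ be the Busemann function with respect to $\omega$; each vertex $v$ has one neighbour $v^-$ with $\mathfrak h(v^-)=\mathfrak h(v)-1$ and $p$ neighbours $w$ with $w^-=v$. For $v$ with $k=\mathfrak h(v)$, $S_v=\{(x+iy,v):x\in\mathbb R,q^{k-1}\le y\le q^k\}$, $S_v^o$ the same with strict inequalities, $L_v=\{(x+iq^k,v)\}$. $\mathrm{HT}(p,q)$ is obtained from the disjoint union of the $S_v$ by identifying, for every $w$ with $w^-=v$, the bottom line of $S_w$ with $L_v$ pointwise; $\mathrm{HT}^o=\bigcup_vS_v^o$. Each strip carries the hyperbolic metric $y^{-2}(dx^2+dy^2)$ and $\mathrm{HT}$ the induced path metric (''tends to infinity at infinity'' refers to leaving every compact set). $\mathcal C^\infty(\mathrm{HT})$: continuous $f$ such that for each $v$, $f(\cdot,v)$ has continuous partial derivatives of all orders in $S_v^o$ that are bounded on $\{(z,v)\in S_v^o:|\mathrm{Re}\,z|\le R\}$ for every $R>0$. *)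

From Stdlib Require Import Reals ZArith List.
From Coquelicot Require Import Coquelicot.
Open Scope R_scope.

(* Edges are {v, pred v}.  Such a structure is exactly a
   homogeneous tree of degree p+1 with a distinguished end (the end of the rays
   v, pred v, pred (pred v), ...) and a Busemann function with respect to it. *)
Definition is_homtree_with_end (p : nat) (V : Type) (pred : V -> V) (h : V -> Z)
  : Prop :=
  (forall v, h (pred v) = (h v - 1)%Z) /\
  (forall v, exists l : list V,
      NoDup l /\ length l = p /\ (forall w, In w l <-> pred w = v)) /\
  (forall u w, exists m n : nat, Nat.iter m pred u = Nat.iter n pred w).

Definition in_strip (q : R) (k : Z) (y : R) : Prop :=
  powerRZ q (k - 1) <= y <= powerRZ q k.
Definition in_ostrip (q : R) (k : Z) (y : R) : Prop :=
  powerRZ q (k - 1) < y < powerRZ q k.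

(* A function on HT(p,q) is represented as f : V -> R -> R -> R,
   f v x y = f(x+iy, v) for (x+iy, v) in S_v (values outside S_v are irrelevant). *)

Definition partial (b : bool) (g : R -> R -> R) : R -> R -> R :=
  fun x y => if b then Derive (fun t => g t y) x else Derive (fun t => g x t) y.
Definition ex_partial (b : bool) (g : R -> R -> R) (x y : R) : Prop :=
  if b then ex_derive (fun t => g t y) x else ex_derive (fun t => g x t) y.
(* iterated partial derivative along a word of directions (last letter applied first) *)
Fixpoint Dw (w : list bool) (g : R -> R -> R) : R -> R -> R :=
  match w with
  | nil => g
  | b :: w' => partial b (Dw w' g)
  end.
Definition dx (g : R -> R -> R) := partial true g.
Definition dy (g : R -> R -> R) := partial false g.

Section HT.
Variables (V : Type) (pred : V -> V) (h : V -> Z) (q : R).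

(* f is well defined on HT: the bottom line of S_w is identified pointwise with
   L_{pred w}, the top line of S_{pred w}. *)
Definition HT_welldef (f : V -> R -> R -> R) : Prop :=
  forall w x, f (pred w) x (powerRZ q (h (pred w))) = f w x (powerRZ q (h (pred w))).

(* continuity on HT: well defined and continuous on each closed strip
   (each line L_v meets only finitely many strips, so this is continuity for
   the quotient / path-metric topology). *)
Definition HT_continuous (f : V -> R -> R -> R) : Prop :=
  HT_welldef f /\
  forall v x y, in_strip q (h v) y ->
    forall eps : R, 0 < eps -> exists delta : R, 0 < delta /\
      forall x' y', in_strip q (h v) y' -> Rabs (x' - x) < delta ->
        Rabs (y' - y) < delta -> Rabs (f v x' y' - f v x y) < eps.

Definition HT_smooth (f : V -> R -> R -> R) : Prop :=
  HT_continuous f /\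
  forall v (w : list bool),
    (forall x y, in_ostrip q (h v) y ->
        (forall b, ex_partial b (Dw w (f v)) x y) /\
        continuous (fun z : R * R => Dw w (f v) (fst z) (snd z)) (x, y)) /\
    (forall Rb : R, exists B : R, forall x y, in_ostrip q (h v) y ->
        Rabs x <= Rb -> Rabs (Dw w (f v) x y) <= B).

(* f tends to infinity at infinity: every sublevel set {f <= M} is relatively
   compact, i.e. contained in a finite union of truncated strips
   S_v /\ {|Re z| <= R}. *)
Definition HT_tends_to_infinity (f : V -> R -> R -> R) : Prop :=
  forall M : R, exists (F : list V) (Rb : R),
    forall v x y, in_strip q (h v) y -> f v x y <= M -> In v F /\ Rabs x <= Rb.

End HT.

From Stdlib Require Import Reals ZArith List Lra Lia.
From Stdlib Require Import FunctionalExtensionality ConstructiveEpsilon ClassicalEpsilon.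
From Coquelicot Require Import Coquelicot.
Open Scope R_scope.

(* On the strip S_v put L = q^(h v - 1) and U = q L, and let c be the graph distance
   to a fixed vertex of the tree.  rho0 interpolates in y, by a smooth step that is
   constant near both boundary lines, between 1 + c(v^-) + ln (1 + x^2/L^2) on the
   bottom line and 1 + c(v) + ln (1 + x^2/U^2) on the top line.  These boundary values
   agree on every glued line, so rho0 is continuous on HT.  Since
   rho0 >= c(v) + ln (1 + x^2/U^2), a sublevel set meets finitely many strips, each in a
   bounded range of x.  The x-derivatives of ln (1 + x^2/Q^2) are O(1/Q) and O(1/Q^2);
   the y-derivatives of rho0 are those of the step, O(1/L) and O(1/L^2), times a factor
   bounded by |c(v) - c(v^-)| + ln q^2 <= 1 + ln q^2.  As y <= q L on S_v, the weights y
   and y^2 in |grad rho0| and A_alpha rho0 make all these bounds uniform in v. *)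

(** * Smooth functions of one variable *)

Fixpoint derivable_n (n : nat) (f : R -> R) : Prop :=
  match n with
  | O => True
  | S n => (forall x, ex_derive f x) /\ derivable_n n (Derive f)
  end.

Definition smooth (f : R -> R) : Prop := forall n, derivable_n n f.

Lemma derivable_n_S n f : derivable_n (S n) f -> derivable_n n f.
Proof.
  revert f; induction n as [|n IH]; intros f [Hf HDf]; [exact I|].
  split; [exact Hf | apply IH, HDf].
Qed.

Lemma derivable_n_is_derive n f f' :
  (forall x, is_derive f x (f' x)) -> derivable_n n f' -> derivable_n (S n) f.
Proof.
  intros Hf Hf'. split; [intros x; exists (f' x); apply Hf|].
  replace (Derive f) with f'; [exact Hf'|].
  apply functional_extensionality; intros x; symmetry; apply is_derive_unique, Hf.
Qed.

Lemma derivable_n_const n c : derivable_n n (fun _ => c).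
Proof.
  revert c; induction n as [|n IH]; intros c; [exact I|].
  apply (derivable_n_is_derive _ _ (fun _ => 0)); [|apply IH].
  intros x; apply (is_derive_const c).
Qed.

Lemma derivable_n_id n : derivable_n n (fun x => x).
Proof.
  destruct n as [|n]; [exact I|].
  apply (derivable_n_is_derive _ _ (fun _ => 1)); [|apply derivable_n_const].
  intros x; apply (is_derive_id x).
Qed.

Lemma derivable_n_plus n f g :
  derivable_n n f -> derivable_n n g -> derivable_n n (fun x => f x + g x).
Proof.
  revert f g; induction n as [|n IH]; intros f g Hf Hg; [exact I|].
  destruct Hf as [Hf HDf], Hg as [Hg HDg].
  apply (derivable_n_is_derive _ _ (fun x => Derive f x + Derive g x)); [|now apply IH].
  intros x; apply (is_derive_plus f g); apply Derive_correct; auto.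
Qed.

Lemma derivable_n_mult n f g :
  derivable_n n f -> derivable_n n g -> derivable_n n (fun x => f x * g x).
Proof.
  revert f g; induction n as [|n IH]; intros f g Hf Hg; [exact I|].
  pose proof (derivable_n_S _ _ Hf) as Hf'; pose proof (derivable_n_S _ _ Hg) as Hg'.
  destruct Hf as [Hf HDf], Hg as [Hg HDg].
  apply (derivable_n_is_derive _ _ (fun x => Derive f x * g x + f x * Derive g x)).
  - intros x; apply (is_derive_mult f g); try apply Derive_correct; auto.
    intros; apply Rmult_comm.
  - apply derivable_n_plus; apply IH; auto.
Qed.

Lemma derivable_n_inv n f :
  derivable_n n f -> (forall x, f x <> 0) -> derivable_n n (fun x => / f x).
Proof.
  revert f; induction n as [|n IH]; intros f Hf Hnz; [exact I|].
  pose proof (derivable_n_S _ _ Hf) as Hf'; destruct Hf as [Hf HDf].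
  apply (derivable_n_is_derive _ _ (fun x => (-1) * Derive f x * (/ f x * / f x))).
  - intros x. replace ((-1) * Derive f x * (/ f x * / f x)) with (- Derive f x / (f x) ^ 2)
      by (field; apply Hnz).
    apply (is_derive_inv f); [apply Derive_correct, Hf | apply Hnz].
  - apply derivable_n_mult; [apply derivable_n_mult|]; auto using derivable_n_const.
    apply derivable_n_mult; apply IH; auto.
Qed.

Lemma derivable_n_comp_affine n f a b :
  derivable_n n f -> derivable_n n (fun x => f (a * x + b)).
Proof.
  revert f; induction n as [|n IH]; intros f Hf; [exact I|].
  destruct Hf as [Hf HDf].
  apply (derivable_n_is_derive _ _ (fun x => a * Derive f (a * x + b))).
  - intros x. apply (is_derive_comp f (fun x => a * x + b)); [apply Derive_correct, Hf|].
    auto_derive; auto; ring.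
  - apply derivable_n_mult; [apply derivable_n_const | apply IH, HDf].
Qed.

Lemma smooth_const c : smooth (fun _ => c).
Proof. intros n; apply derivable_n_const. Qed.

Lemma smooth_id : smooth (fun x => x).
Proof. intros n; apply derivable_n_id. Qed.

Lemma smooth_plus f g : smooth f -> smooth g -> smooth (fun x => f x + g x).
Proof. intros Hf Hg n; apply derivable_n_plus; auto. Qed.

Lemma smooth_mult f g : smooth f -> smooth g -> smooth (fun x => f x * g x).
Proof. intros Hf Hg n; apply derivable_n_mult; auto. Qed.

Lemma smooth_minus f g : smooth f -> smooth g -> smooth (fun x => f x - g x).
Proof.
  intros Hf Hg.
  replace (fun x => f x - g x) with (fun x => f x + (-1) * g x)
    by (apply functional_extensionality; intros; ring).
  apply smooth_plus, smooth_mult; auto using smooth_const.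
Qed.

Lemma smooth_inv f : smooth f -> (forall x, f x <> 0) -> smooth (fun x => / f x).
Proof. intros Hf Hnz n; apply derivable_n_inv; auto. Qed.

Lemma smooth_comp_affine f a b : smooth f -> smooth (fun x => f (a * x + b)).
Proof. intros Hf n; apply derivable_n_comp_affine, Hf. Qed.

Lemma smooth_is_derive f f' : (forall x, is_derive f x (f' x)) -> smooth f' -> smooth f.
Proof. intros Hf Hf' [|n]; [exact I | apply (derivable_n_is_derive _ _ _ Hf), Hf']. Qed.

Lemma smooth_ex_derive f : smooth f -> forall x, ex_derive f x.
Proof. intros Hf; apply (Hf 1%nat). Qed.

Lemma smooth_Derive f : smooth f -> smooth (Derive f).
Proof. intros Hf n; apply (Hf (S n)). Qed.

Lemma smooth_Derive_n f n : smooth f -> smooth (Derive_n f n).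
Proof. intros Hf; induction n as [|n IH]; [exact Hf | apply smooth_Derive, IH]. Qed.

Lemma smooth_continuity_pt f : smooth f -> forall x, continuity_pt f x.
Proof.
  intros Hf x. apply continuity_pt_filterlim.
  apply (@ex_derive_continuous R_AbsRing R_NormedModule), smooth_ex_derive, Hf.
Qed.

(** * The flat function exp (-1/t) and a smooth step *)

Inductive is_poly : (R -> R) -> Prop :=
  | is_poly_const c : is_poly (fun _ => c)
  | is_poly_id : is_poly (fun u => u)
  | is_poly_plus f g : is_poly f -> is_poly g -> is_poly (fun u => f u + g u)
  | is_poly_mult f g : is_poly f -> is_poly g -> is_poly (fun u => f u * g u).

Lemma is_poly_derive f :
  is_poly f -> exists f', is_poly f' /\ forall u, is_derive f u (f' u).
Proof.
  induction 1 as [c| |f g _ [f' [Pf Df]] _ [g' [Pg Dg]]|f g Pf0 [f' [Pf Df]] Pg0 [g' [Pg Dg]]].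
  - exists (fun _ => 0); split; [constructor | intros; apply (is_derive_const c)].
  - exists (fun _ => 1); split; [constructor | intros u; apply (is_derive_id u)].
  - exists (fun u => f' u + g' u); split; [constructor; auto|].
    intros u; apply (is_derive_plus f g); auto.
  - exists (fun u => f' u * g u + f u * g' u); split; [repeat constructor; auto|].
    intros u; apply (is_derive_mult f g); auto. intros; apply Rmult_comm.
Qed.

Lemma is_poly_bound f :
  is_poly f -> exists C N, 0 <= C /\ forall u, 0 <= u -> Rabs (f u) <= C * (1 + u) ^ N.
Proof.
  induction 1 as [c| |f g _ [C1 [N1 [HC1 B1]]] _ [C2 [N2 [HC2 B2]]]
                  |f g _ [C1 [N1 [HC1 B1]]] _ [C2 [N2 [HC2 B2]]]].
  - exists (Rabs c), 0%nat; split; [apply Rabs_pos | intros; simpl; lra].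
  - exists 1, 1%nat; split; [lra | intros u Hu; simpl; rewrite Rabs_right; lra].
  - exists (C1 + C2), (N1 + N2)%nat; split; [lra|]. intros u Hu.
    assert (E1 : (1 + u) ^ N1 <= (1 + u) ^ (N1 + N2)) by (apply Rle_pow; [lra | lia]).
    assert (E2 : (1 + u) ^ N2 <= (1 + u) ^ (N1 + N2)) by (apply Rle_pow; [lra | lia]).
    specialize (B1 u Hu); specialize (B2 u Hu).
    eapply Rle_trans; [apply Rabs_triang|].
    assert (C1 * (1 + u) ^ N1 <= C1 * (1 + u) ^ (N1 + N2)) by (apply Rmult_le_compat_l; auto).
    assert (C2 * (1 + u) ^ N2 <= C2 * (1 + u) ^ (N1 + N2)) by (apply Rmult_le_compat_l; auto).
    nra.
  - exists (C1 * C2), (N1 + N2)%nat; split; [nra|]. intros u Hu.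
    rewrite Rabs_mult, pow_add.
    replace (C1 * C2 * ((1 + u) ^ N1 * (1 + u) ^ N2))
      with ((C1 * (1 + u) ^ N1) * (C2 * (1 + u) ^ N2)) by ring.
    apply Rmult_le_compat; auto using Rabs_pos.
Qed.

Lemma exp_mult_INR n a : exp (INR n * a) = exp a ^ n.
Proof.
  induction n as [|n IH]; [simpl; rewrite Rmult_0_l, exp_0; auto|].
  rewrite S_INR, Rmult_plus_distr_r, Rmult_1_l, exp_plus, IH. simpl; ring.
Qed.

(* From [exp u >= (1 + u / (N + 1)) ^ (N + 1)]. *)
Lemma pow_mul_exp_neg_le N u : 0 <= u ->
  (1 + u) ^ N * exp (- u) <= (INR N + 1) ^ S N / (INR N + 1 + u).
Proof.
  intros Hu. set (K := INR N + 1).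
  assert (HK : 1 <= K) by (unfold K; pose proof (pos_INR N); lra).
  assert (Hexp : (K + u) ^ S N / K ^ S N <= exp u).
  { replace ((K + u) ^ S N / K ^ S N) with ((1 + u / K) ^ S N)
      by (unfold Rdiv; rewrite <- pow_inv, <- Rpow_mult_distr; f_equal; field; lra).
    replace u with (INR (S N) * (u / K)) at 2 by (rewrite S_INR; fold K; field; lra).
    rewrite exp_mult_INR. apply pow_incr. split.
    - assert (0 <= u / K) by (apply Rdiv_le_0_compat; lra). lra.
    - apply exp_ineq1_le. }
  assert (PKu : 0 < (K + u) ^ S N) by (apply pow_lt; lra).
  assert (PK : 0 < K ^ S N) by (apply pow_lt; lra).
  rewrite exp_Ropp.
  apply Rle_trans with ((K + u) ^ N * / exp u).
  { apply Rmult_le_compat_r; [left; apply Rinv_0_lt_compat, exp_pos|].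
    apply pow_incr; lra. }
  apply Rle_trans with ((K + u) ^ N * (K ^ S N / (K + u) ^ S N)).
  { apply Rmult_le_compat_l; [apply pow_le; lra|].
    rewrite <- (Rinv_div ((K + u) ^ S N) (K ^ S N)).
    apply Rinv_le_contravar; [apply Rdiv_lt_0_compat|]; auto. }
  right. simpl. field. split; [lra | apply Rgt_not_eq, pow_lt; lra].
Qed.

Definition flat (Q : R -> R) (t : R) : R :=
  if Rle_dec t 0 then 0 else Q (/ t) * exp (- / t).

Lemma flat_le_linear Q : is_poly Q ->
  exists K, 0 <= K /\ forall t, 0 < t -> Rabs (Q (/ t) * exp (- / t)) <= K * t.
Proof.
  intros HQ. destruct (is_poly_bound Q HQ) as [C [N [HC B]]].
  assert (HN : 1 <= INR N + 1) by (pose proof (pos_INR N); lra).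
  exists (C * (INR N + 1) ^ S N); split; [apply Rmult_le_pos; auto; apply pow_le; lra|].
  intros t Ht. assert (Hu : 0 < / t) by (apply Rinv_0_lt_compat; auto).
  rewrite Rabs_mult, (Rabs_right (exp _)) by (left; apply exp_pos).
  apply Rle_trans with (C * ((1 + / t) ^ N * exp (- / t))).
  { rewrite <- Rmult_assoc. apply Rmult_le_compat_r; [left; apply exp_pos | apply B; lra]. }
  rewrite Rmult_assoc. apply Rmult_le_compat_l; auto.
  eapply Rle_trans; [apply pow_mul_exp_neg_le; lra|].
  unfold Rdiv. apply Rmult_le_compat_l; [apply pow_le; lra|].
  replace t with (/ / t) at 2 by (field; lra).
  apply Rinv_le_contravar; lra.
Qed.

Lemma is_derive_flat Q : is_poly Q ->
  exists Q', is_poly Q' /\ forall t, is_derive (flat Q) t (flat Q' t).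
Proof.
  intros HQ. destruct (is_poly_derive Q HQ) as [DQ [HDQ DerQ]].
  exists (fun u => u * u * (Q u + (-1) * DQ u)); split; [repeat constructor; auto|].
  intros t. destruct (Rtotal_order t 0) as [Hlt | [-> | Hgt]].
  - apply (is_derive_ext_loc (fun _ => 0)).
    + exists (mkposreal (- t) ltac:(lra)); intros y Hy.
      change (Rabs (y - t) < - t) in Hy; apply Rabs_def2 in Hy.
      unfold flat. destruct (Rle_dec y 0); [auto | lra].
    + unfold flat. destruct (Rle_dec t 0); [apply (is_derive_const 0) | lra].
  - (* at 0 the difference quotient is [(1/h) Q(1/h) exp(-1/h)], which is [O(h)] *)
    apply is_derive_Reals.
    destruct (flat_le_linear (fun u => u * Q u)) as [K [HK B]]; [repeat constructor; auto|].
    intros eps Heps. assert (Hd : 0 < eps / (K + 1)) by (apply Rdiv_lt_0_compat; lra).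
    exists (mkposreal _ Hd). intros dt Hdt0 Hdt. simpl in Hdt.
    unfold flat. destruct (Rle_dec 0 0) as [_|]; [|lra]. rewrite Rplus_0_l.
    destruct (Rle_dec dt 0).
    + replace ((0 - 0) / dt - 0) with 0 by (field; lra). rewrite Rabs_R0; auto.
    + replace ((Q (/ dt) * exp (- / dt) - 0) / dt - 0)
        with (/ dt * Q (/ dt) * exp (- / dt)) by (field; lra).
      rewrite Rabs_right in Hdt by lra.
      eapply Rle_lt_trans; [apply B; lra|].
      apply Rle_lt_trans with (K * (eps / (K + 1))); [apply Rmult_le_compat_l; lra|].
      apply Rlt_le_trans with ((K + 1) * (eps / (K + 1))); [nra | right; field; lra].
  - apply (is_derive_ext_loc (fun s => Q (/ s) * exp (- / s))).
    + exists (mkposreal t Hgt); intros y Hy.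
      change (Rabs (y - t) < t) in Hy; apply Rabs_def2 in Hy.
      unfold flat. destruct (Rle_dec y 0); [lra | auto].
    + assert (HQs : is_derive (fun s => Q (/ s)) t (- / (t * t) * DQ (/ t))).
      { apply (is_derive_comp Q (fun s => / s)); [apply DerQ | auto_derive; [lra | field; lra]]. }
      assert (He : is_derive (fun s => exp (- / s)) t (exp (- / t) * / (t * t)))
        by (auto_derive; [lra | field; lra]).
      unfold flat. destruct (Rle_dec t 0); [lra|].
      replace (/ t * / t * (Q (/ t) + -1 * DQ (/ t)) * exp (- / t))
        with ((- / (t * t) * DQ (/ t)) * exp (- / t) + Q (/ t) * (exp (- / t) * / (t * t)))
        by (field; lra).
      apply (is_derive_mult (fun s => Q (/ s)) (fun s => exp (- / s))); auto.
      intros; apply Rmult_comm.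
Qed.

Lemma smooth_flat Q : is_poly Q -> smooth (flat Q).
Proof.
  intros HQ n. revert Q HQ. induction n as [|n IH]; intros Q HQ; [exact I|].
  destruct (is_derive_flat Q HQ) as [Q' [HQ' D]].
  apply (derivable_n_is_derive _ _ _ D), IH, HQ'.
Qed.

Definition bump : R -> R := flat (fun _ => 1).

Lemma bump_nonpos t : t <= 0 -> bump t = 0.
Proof. unfold bump, flat; intros; destruct (Rle_dec t 0); [auto | lra]. Qed.

Lemma bump_pos t : 0 < t -> 0 < bump t.
Proof.
  unfold bump, flat; intros; destruct (Rle_dec t 0); [lra|].
  rewrite Rmult_1_l; apply exp_pos.
Qed.

Lemma bump_ge0 t : 0 <= bump t.
Proof.
  destruct (Rle_dec t 0); [rewrite bump_nonpos; lra | left; apply bump_pos; lra].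
Qed.

Lemma smooth_bump : smooth bump.
Proof. apply smooth_flat; constructor. Qed.

Definition step (t : R) : R := bump t / (bump t + bump (1 - t)).

Lemma step_denominator_pos t : 0 < bump t + bump (1 - t).
Proof.
  pose proof (bump_ge0 t); pose proof (bump_ge0 (1 - t)).
  destruct (Rle_dec t 0); [pose proof (bump_pos (1 - t)) | pose proof (bump_pos t)]; lra.
Qed.

Lemma smooth_step : smooth step.
Proof.
  assert (Hrefl : smooth (fun t => bump (1 - t))).
  { replace (fun t => bump (1 - t)) with (fun t => bump ((-1) * t + 1))
      by (apply functional_extensionality; intros; f_equal; ring).
    apply smooth_comp_affine, smooth_bump. }
  apply smooth_mult; [apply smooth_bump|].
  apply smooth_inv; [apply smooth_plus; auto using smooth_bump|].
  intros t; pose proof (step_denominator_pos t); lra.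
Qed.

Lemma step_range t : 0 <= step t <= 1.
Proof.
  unfold step. pose proof (step_denominator_pos t). pose proof (bump_ge0 t).
  pose proof (bump_ge0 (1 - t)).
  split; [apply Rdiv_le_0_compat; lra|].
  apply Rmult_le_reg_r with (bump t + bump (1 - t)); auto.
  unfold Rdiv; rewrite Rmult_assoc, Rinv_l; lra.
Qed.

Lemma step_nonpos t : t <= 0 -> step t = 0.
Proof. intros; unfold step; rewrite bump_nonpos by lra; unfold Rdiv; ring. Qed.

Lemma step_ge1 t : 1 <= t -> step t = 1.
Proof.
  intros; unfold step; rewrite (bump_nonpos (1 - t)) by lra.
  rewrite Rplus_0_r; apply Rdiv_diag. pose proof (bump_pos t); lra.
Qed.

Lemma Derive_locally_const f t c : locally t (fun u => f u = c) ->
  Derive f t = 0 /\ Derive (Derive f) t = 0.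
Proof.
  intros Hc.
  assert (HD : forall u, locally u (fun v => f v = c) -> Derive f u = 0).
  { intros u Hu. rewrite (Derive_ext_loc f (fun _ => c)) by exact Hu. apply Derive_const. }
  split; [apply HD, Hc|].
  rewrite (Derive_ext_loc (Derive f) (fun _ => 0)); [apply Derive_const|].
  apply (filter_imp _ _ HD), locally_locally, Hc.
Qed.

Lemma Derive_step_outside t : t < 0 \/ 1 < t ->
  Derive step t = 0 /\ Derive (Derive step) t = 0.
Proof.
  intros [Ht | Ht].
  - apply (Derive_locally_const _ _ 0).
    exists (mkposreal (- t) ltac:(lra)); intros u Hu.
    change (Rabs (u - t) < - t) in Hu; apply Rabs_def2 in Hu. apply step_nonpos; lra.
  - apply (Derive_locally_const _ _ 1).
    exists (mkposreal (t - 1) ltac:(lra)); intros u Hu.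
    change (Rabs (u - t) < t - 1) in Hu; apply Rabs_def2 in Hu. apply step_ge1; lra.
Qed.

Lemma continuity_bounded_interval f a b : (forall t, continuity_pt f t) ->
  exists M, forall t, a <= t <= b -> Rabs (f t) <= M.
Proof.
  intros Hf. destruct (Rle_dec a b) as [Hab | Hab]; [|exists 0; intros; lra].
  destruct (continuity_ab_maj f a b Hab (fun c _ => Hf c)) as [tmax [Hmax _]].
  destruct (continuity_ab_min f a b Hab (fun c _ => Hf c)) as [tmin [Hmin _]].
  exists (Rmax (f tmax) (- f tmin)). intros t Ht.
  specialize (Hmax t Ht); specialize (Hmin t Ht).
  apply Rabs_le. pose proof (Rmax_l (f tmax) (- f tmin)); pose proof (Rmax_r (f tmax) (- f tmin)).
  lra.
Qed.

Lemma step_Derive_bounded : exists M1 M2, forall t,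
  Rabs (Derive step t) <= M1 /\ Rabs (Derive (Derive step) t) <= M2.
Proof.
  destruct (continuity_bounded_interval (Derive step) 0 1) as [M1 H1].
  { apply smooth_continuity_pt, smooth_Derive, smooth_step. }
  destruct (continuity_bounded_interval (Derive (Derive step)) 0 1) as [M2 H2].
  { apply smooth_continuity_pt, smooth_Derive, smooth_Derive, smooth_step. }
  exists (Rabs M1), (Rabs M2). intros t.
  destruct (Rlt_dec t 0) as [Ht | Ht]; [|destruct (Rlt_dec 1 t) as [Ht' | Ht']].
  - destruct (Derive_step_outside t (or_introl Ht)) as [-> ->].
    rewrite Rabs_R0; split; apply Rabs_pos.
  - destruct (Derive_step_outside t (or_intror Ht')) as [-> ->].
    rewrite Rabs_R0; split; apply Rabs_pos.
  - split; eapply Rle_trans; [apply H1; lra | apply Rle_abs | apply H2; lra | apply Rle_abs].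
Qed.

(** * A logarithmic weight *)

Definition log_weight (Q x : R) : R := ln (Q * Q + x * x) - ln (Q * Q).
Definition dlog_weight (Q x : R) : R := 2 * x / (Q * Q + x * x).
Definition d2log_weight (Q x : R) : R :=
  2 * (Q * Q - x * x) / ((Q * Q + x * x) * (Q * Q + x * x)).

Section LogWeight.
Variable Q : R.
Hypothesis HQ : 0 < Q.

Let Hden x : 0 < Q * Q + x * x.
Proof. nra. Qed.

Lemma is_derive_log_weight x : is_derive (log_weight Q) x (dlog_weight Q x).
Proof. pose proof (Hden x). unfold log_weight, dlog_weight. auto_derive; [lra | field; lra]. Qed.

Lemma is_derive_dlog_weight x : is_derive (dlog_weight Q) x (d2log_weight Q x).
Proof. pose proof (Hden x). unfold dlog_weight, d2log_weight. auto_derive; [lra | field; lra]. Qed.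

Lemma Derive_dlog_weight : Derive (dlog_weight Q) = d2log_weight Q.
Proof.
  apply functional_extensionality; intros x; apply is_derive_unique, is_derive_dlog_weight.
Qed.

Lemma smooth_dlog_weight : smooth (dlog_weight Q).
Proof.
  unfold dlog_weight, Rdiv. apply smooth_mult.
  - apply smooth_mult; auto using smooth_const, smooth_id.
  - apply smooth_inv; [apply smooth_plus; auto using smooth_const, smooth_mult, smooth_id|].
    intros x; pose proof (Hden x); lra.
Qed.

Lemma smooth_log_weight : smooth (log_weight Q).
Proof. apply (smooth_is_derive _ _ is_derive_log_weight), smooth_dlog_weight. Qed.

Lemma log_weight_ge0 x : 0 <= log_weight Q x.
Proof.
  unfold log_weight. assert (ln (Q * Q) <= ln (Q * Q + x * x)) by (apply ln_le; nra). lra.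
Qed.

Lemma Rabs_dlog_weight_le x : Rabs (dlog_weight Q x) <= / Q.
Proof.
  pose proof (Hden x). unfold dlog_weight.
  rewrite Rabs_div by lra. rewrite (Rabs_right (Q * Q + x * x)) by lra.
  apply Rle_div_l; [lra|]. apply Rmult_le_reg_l with Q; [lra|].
  field_simplify; [|lra]. rewrite Rabs_mult, (Rabs_right 2) by lra.
  destruct (Rle_dec 0 x); [rewrite Rabs_right by lra | rewrite Rabs_left by lra];
    [pose proof (pow2_ge_0 (Q - x)) | pose proof (pow2_ge_0 (Q + x))]; nra.
Qed.

Lemma Rabs_d2log_weight_le x : Rabs (d2log_weight Q x) <= 2 / (Q * Q).
Proof.
  pose proof (Hden x). assert (0 < (Q * Q + x * x) * (Q * Q + x * x)) by nra.
  unfold d2log_weight. rewrite Rabs_div by (apply Rgt_not_eq; lra).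
  rewrite (Rabs_right ((Q * Q + x * x) * _)) by lra.
  assert (Hnum : Rabs (2 * (Q * Q - x * x)) <= 2 * (Q * Q + x * x)) by (apply Rabs_le; nra).
  apply Rle_trans with (2 * (Q * Q + x * x) / ((Q * Q + x * x) * (Q * Q + x * x))).
  { apply Rmult_le_compat_r; [left; apply Rinv_0_lt_compat; lra | exact Hnum]. }
  replace (2 * (Q * Q + x * x) / ((Q * Q + x * x) * (Q * Q + x * x)))
    with (2 / (Q * Q + x * x)) by (field; lra).
  apply Rmult_le_compat_l; [lra | apply Rinv_le_contravar; nra].
Qed.

Lemma log_weight_le_inv x M : log_weight Q x <= M -> Rabs x <= Q * exp M.
Proof.
  intros HM. pose proof (Hden x). pose proof (exp_pos M).
  assert (HQQ : 0 < Q * Q) by nra.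
  assert (Hx : Q * Q + x * x <= Q * Q * exp M).
  { assert (Hpos : 0 < Q * Q * exp M) by nra.
    apply Rnot_lt_le; intros Hlt. apply (ln_increasing _ _ Hpos) in Hlt.
    rewrite ln_mult, ln_exp in Hlt by auto. unfold log_weight in HM. lra. }
  apply Rsqr_incr_0_var; [|nra]. rewrite <- Rsqr_abs. unfold Rsqr.
  pose proof (pow2_ge_0 (exp M - 1)).
  assert (Q * Q * exp M <= Q * Q * (exp M * exp M + 1))
    by (apply Rmult_le_compat_l; nra).
  nra.
Qed.
End LogWeight.

Lemma log_weight_sub_scale L q x : 0 < L -> 1 < q ->
  0 <= log_weight L x - log_weight (q * L) x <= ln (q * q).
Proof.
  intros HL Hq. assert (HLL : 0 < L * L) by nra. assert (Hqq : 1 < q * q) by nra.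
  assert (Hsplit : ln (q * L * (q * L)) = ln (q * q) + ln (L * L))
    by (rewrite <- ln_mult by nra; f_equal; ring).
  assert (Hup : ln (L * L + x * x) <= ln (q * L * (q * L) + x * x)) by (apply ln_le; nra).
  assert (Hlow : ln (q * L * (q * L) + x * x) <= ln (q * q) + ln (L * L + x * x))
    by (rewrite <- ln_mult by nra; apply ln_le; nra).
  unfold log_weight. rewrite Hsplit. lra.
Qed.

Definition sep2 (A1 B1 A2 B2 : R -> R) : R -> R -> R :=
  fun x y => A1 x * B1 y + A2 x * B2 y.

Lemma dx_sep2 A1 B1 A2 B2 : (forall x, ex_derive A1 x) -> (forall x, ex_derive A2 x) ->
  dx (sep2 A1 B1 A2 B2) = sep2 (Derive A1) B1 (Derive A2) B2.
Proof.
  intros H1 H2.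
  apply functional_extensionality; intros x; apply functional_extensionality; intros y.
  unfold dx, partial, sep2.
  rewrite (Derive_plus (fun t => A1 t * B1 y) (fun t => A2 t * B2 y)), !Derive_scal_l; auto;
    apply ex_derive_mult; auto using ex_derive_const.
Qed.

Lemma dy_sep2 A1 B1 A2 B2 : (forall y, ex_derive B1 y) -> (forall y, ex_derive B2 y) ->
  dy (sep2 A1 B1 A2 B2) = sep2 A1 (Derive B1) A2 (Derive B2).
Proof.
  intros H1 H2.
  apply functional_extensionality; intros x; apply functional_extensionality; intros y.
  unfold dy, partial, sep2.
  rewrite (Derive_plus (fun t => A1 x * B1 t) (fun t => A2 x * B2 t)), !Derive_scal; auto;
    apply ex_derive_mult; auto using ex_derive_const.
Qed.

Section Separated.
Variables A1 B1 A2 B2 : R -> R.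
Hypotheses (HA1 : smooth A1) (HB1 : smooth B1) (HA2 : smooth A2) (HB2 : smooth B2).

Lemma Dw_sep2 w : exists n m,
  Dw w (sep2 A1 B1 A2 B2) =
  sep2 (Derive_n A1 n) (Derive_n B1 m) (Derive_n A2 n) (Derive_n B2 m).
Proof.
  induction w as [|b w [n [m IH]]]; [exists 0%nat, 0%nat; reflexivity|].
  destruct b; [exists (S n), m | exists n, (S m)]; simpl Dw; rewrite IH.
  - apply dx_sep2; apply smooth_ex_derive, smooth_Derive_n; auto.
  - apply dy_sep2; apply smooth_ex_derive, smooth_Derive_n; auto.
Qed.

Lemma ex_partial_sep2 b x y : ex_partial b (sep2 A1 B1 A2 B2) x y.
Proof.
  unfold sep2. destruct b; simpl.
  - apply (ex_derive_plus (fun t => A1 t * B1 y) (fun t => A2 t * B2 y));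
      apply ex_derive_mult; auto using ex_derive_const, smooth_ex_derive.
  - apply (ex_derive_plus (fun t => A1 x * B1 t) (fun t => A2 x * B2 t));
      apply ex_derive_mult; auto using ex_derive_const, smooth_ex_derive.
Qed.

Lemma continuity_2d_pt_sep2 x y : continuity_2d_pt (sep2 A1 B1 A2 B2) x y.
Proof.
  assert (Hx : forall f, smooth f -> continuity_2d_pt (fun u v => f u) x y).
  { intros f Hf. apply (continuity_1d_2d_pt_comp f (fun u v => u));
      [apply smooth_continuity_pt, Hf | apply continuity_2d_pt_id1]. }
  assert (Hy : forall f, smooth f -> continuity_2d_pt (fun u v => f v) x y).
  { intros f Hf. apply (continuity_1d_2d_pt_comp f (fun u v => v));
      [apply smooth_continuity_pt, Hf | apply continuity_2d_pt_id2]. }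
  apply continuity_2d_pt_plus; apply continuity_2d_pt_mult; auto.
Qed.

Lemma sep2_bounded_rect a b c d : exists B, forall x y,
  a <= x <= b -> c <= y <= d -> Rabs (sep2 A1 B1 A2 B2 x y) <= B.
Proof.
  destruct (continuity_bounded_interval A1 a b (smooth_continuity_pt _ HA1)) as [M1 H1].
  destruct (continuity_bounded_interval B1 c d (smooth_continuity_pt _ HB1)) as [N1 K1].
  destruct (continuity_bounded_interval A2 a b (smooth_continuity_pt _ HA2)) as [M2 H2].
  destruct (continuity_bounded_interval B2 c d (smooth_continuity_pt _ HB2)) as [N2 K2].
  exists (M1 * N1 + M2 * N2). intros x y Hx Hy. unfold sep2.
  eapply Rle_trans; [apply Rabs_triang|]. rewrite !Rabs_mult.
  apply Rplus_le_compat; apply Rmult_le_compat; auto using Rabs_pos.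
Qed.

End Separated.

Lemma Dw_sep2_regular A1 B1 A2 B2 w :
  smooth A1 -> smooth B1 -> smooth A2 -> smooth B2 ->
  (forall x y, (forall d, ex_partial d (Dw w (sep2 A1 B1 A2 B2)) x y) /\
     continuous (fun z : R * R => Dw w (sep2 A1 B1 A2 B2) (fst z) (snd z)) (x, y)) /\
  (forall x0 x1 y0 y1, exists B, forall x y, x0 <= x <= x1 -> y0 <= y <= y1 ->
     Rabs (Dw w (sep2 A1 B1 A2 B2) x y) <= B).
Proof.
  intros HA1 HB1 HA2 HB2. destruct (Dw_sep2 A1 B1 A2 B2 HA1 HB1 HA2 HB2 w) as [n [m ->]].
  pose proof (smooth_Derive_n _ n HA1); pose proof (smooth_Derive_n _ m HB1).
  pose proof (smooth_Derive_n _ n HA2); pose proof (smooth_Derive_n _ m HB2).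
  split; [intros x y; split|].
  - intros d; apply ex_partial_sep2; auto.
  - apply continuity_2d_pt_filterlim, continuity_2d_pt_sep2; auto.
  - intros; apply sep2_bounded_rect; auto.
Qed.

(** * The exhaustion on one strip *)

(* [step_between L U] vanishes on the lower third of [[L, U]] and equals [1] on the upper third. *)
Definition step_between (L U y : R) : R :=
  step (3 / (U - L) * y + (- 1 - 3 * L / (U - L))).

Definition strip_rho (L U cp cv : R) : R -> R -> R :=
  sep2 (fun x => 1 + cp + log_weight L x) (fun _ => 1)
       (fun x => cv - cp + (log_weight U x - log_weight L x)) (step_between L U).

Section Strip.
Variables q L U cp cv : R.
Hypotheses (Hq : 1 < q) (HL : 0 < L) (HU : U = q * L).

Let HLU : L < U.
Proof. subst U; nra. Qed.

Let a := 3 / (U - L).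
Let b := - 1 - 3 * L / (U - L).

Let Ha : 0 < a.
Proof. apply Rdiv_lt_0_compat; lra. Qed.

Let step_arg y : a * y + b = a * (y - L) - 1.
Proof. unfold a, b; field; lra. Qed.

Let a_width : a * (U - L) = 3.
Proof. unfold a; field; lra. Qed.

Lemma step_between_bottom : step_between L U L = 0.
Proof. unfold step_between; fold a b. apply step_nonpos. rewrite step_arg. lra. Qed.

Lemma step_between_top : step_between L U U = 1.
Proof.
  unfold step_between; fold a b. apply step_ge1. rewrite step_arg. lra.
Qed.

Lemma smooth_step_between : smooth (step_between L U).
Proof. apply smooth_comp_affine, smooth_step. Qed.

Lemma Derive_step_between y : Derive (step_between L U) y = a * Derive step (a * y + b).
Proof.
  apply is_derive_unique. apply (is_derive_comp step (fun y => a * y + b)).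
  - apply Derive_correct, smooth_ex_derive, smooth_step.
  - auto_derive; auto; ring.
Qed.

Lemma Derive2_step_between y :
  Derive (Derive (step_between L U)) y = a * (a * Derive (Derive step) (a * y + b)).
Proof.
  rewrite (Derive_ext _ _ _ Derive_step_between). apply is_derive_unique.
  apply (is_derive_scal (fun y => Derive step (a * y + b))).
  apply (is_derive_comp (Derive step) (fun y => a * y + b)).
  - apply Derive_correct, smooth_ex_derive, smooth_Derive, smooth_step.
  - auto_derive; auto; ring.
Qed.

Let A1 x := 1 + cp + log_weight L x.
Let A2 x := cv - cp + (log_weight U x - log_weight L x).

Let HU0 : 0 < U.
Proof. lra. Qed.

Let smooth_A1 : smooth A1.
Proof. apply smooth_plus; [apply smooth_const | apply smooth_log_weight, HL]. Qed.

Let smooth_A2 : smooth A2.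
Proof.
  apply smooth_plus; [apply smooth_const|].
  apply smooth_minus; apply smooth_log_weight; lra.
Qed.

Let Derive_A1 : Derive A1 = dlog_weight L.
Proof.
  apply functional_extensionality; intros x. apply is_derive_unique.
  rewrite <- (Rplus_0_l (dlog_weight L x)).
  apply (is_derive_plus (fun _ => 1 + cp) (log_weight L));
    [apply (@is_derive_const R_AbsRing R_NormedModule) | apply is_derive_log_weight, HL].
Qed.

Let Derive_A2 : Derive A2 = fun x => dlog_weight U x - dlog_weight L x.
Proof.
  apply functional_extensionality; intros x. apply is_derive_unique.
  rewrite <- (Rplus_0_l (dlog_weight U x - _)).
  apply (is_derive_plus (fun _ => cv - cp) (fun x => log_weight U x - log_weight L x));
    [apply (@is_derive_const R_AbsRing R_NormedModule)|].
  apply (is_derive_minus (log_weight U) (log_weight L)); apply is_derive_log_weight; lra.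
Qed.

Let Derive2_A2 : Derive (Derive A2) = fun x => d2log_weight U x - d2log_weight L x.
Proof.
  rewrite Derive_A2. apply functional_extensionality; intros x. apply is_derive_unique.
  apply (is_derive_minus (dlog_weight U) (dlog_weight L)); apply is_derive_dlog_weight; lra.
Qed.

Lemma strip_rho_bottom x : strip_rho L U cp cv x L = 1 + cp + log_weight L x.
Proof. unfold strip_rho, sep2. rewrite step_between_bottom. ring. Qed.

Lemma strip_rho_top x : strip_rho L U cp cv x U = 1 + cv + log_weight U x.
Proof. unfold strip_rho, sep2. rewrite step_between_top. ring. Qed.

Lemma continuity_2d_pt_strip_rho x y : continuity_2d_pt (strip_rho L U cp cv) x y.
Proof.
  apply continuity_2d_pt_sep2; auto using smooth_const, smooth_step_between.
Qed.

Lemma Dw_strip_rho_regular w :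
  (forall x y, (forall d, ex_partial d (Dw w (strip_rho L U cp cv)) x y) /\
     continuous (fun z : R * R => Dw w (strip_rho L U cp cv) (fst z) (snd z)) (x, y)) /\
  (forall x0 x1 y0 y1, exists B, forall x y, x0 <= x <= x1 -> y0 <= y <= y1 ->
     Rabs (Dw w (strip_rho L U cp cv) x y) <= B).
Proof. apply Dw_sep2_regular; auto using smooth_const, smooth_step_between. Qed.

Lemma dx_strip_rho x y : dx (strip_rho L U cp cv) x y =
  dlog_weight L x + (dlog_weight U x - dlog_weight L x) * step_between L U y.
Proof.
  unfold strip_rho. rewrite dx_sep2 by (apply smooth_ex_derive; auto).
  fold A1 A2. unfold sep2. rewrite Derive_A1, Derive_A2. ring.
Qed.

Lemma dxx_strip_rho x y : dx (dx (strip_rho L U cp cv)) x y =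
  d2log_weight L x + (d2log_weight U x - d2log_weight L x) * step_between L U y.
Proof.
  unfold strip_rho. rewrite dx_sep2 by (apply smooth_ex_derive; auto).
  rewrite dx_sep2 by (apply smooth_ex_derive, smooth_Derive; auto).
  fold A1 A2. unfold sep2. rewrite Derive2_A2, Derive_A1, Derive_dlog_weight by exact HL. ring.
Qed.

Lemma dy_strip_rho x y :
  dy (strip_rho L U cp cv) x y = A2 x * (a * Derive step (a * y + b)).
Proof.
  unfold strip_rho.
  rewrite dy_sep2 by (apply smooth_ex_derive; auto using smooth_const, smooth_step_between).
  fold A1 A2. unfold sep2. rewrite Derive_const, Derive_step_between. ring.
Qed.

Lemma dyy_strip_rho x y :
  dy (dy (strip_rho L U cp cv)) x y = A2 x * (a * (a * Derive (Derive step) (a * y + b))).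
Proof.
  unfold strip_rho.
  rewrite dy_sep2 by (apply smooth_ex_derive; auto using smooth_const, smooth_step_between).
  rewrite dy_sep2
    by (apply smooth_ex_derive, smooth_Derive; auto using smooth_const, smooth_step_between).
  fold A1 A2. unfold sep2. rewrite Derive2_step_between.
  rewrite (Derive_ext (Derive (fun _ => 1)) (fun _ => 0)) by (intros; apply Derive_const).
  rewrite Derive_const. ring.
Qed.

Hypotheses (Hcp : 0 <= cp) (Hcv : 0 <= cv) (Hc : cv - 1 <= cp <= cv + 1).

Lemma strip_rho_ge x y :
  1 <= strip_rho L U cp cv x y /\ cv + log_weight U x <= strip_rho L U cp cv x y.
Proof.
  unfold strip_rho, sep2. pose proof (step_range (a * y + b)) as Hs.
  unfold step_between; fold a b. set (s := step (a * y + b)) in *.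
  pose proof (log_weight_sub_scale L q x HL Hq). rewrite <- HU in *.
  pose proof (log_weight_ge0 L HL x). pose proof (log_weight_ge0 U HU0 x).
  set (gL := log_weight L x) in *; set (gU := log_weight U x) in *.
  assert (0 <= (1 - s) * (cp + gL)) by (apply Rmult_le_pos; lra).
  assert (0 <= s * (cv + gU)) by (apply Rmult_le_pos; lra).
  assert (0 <= (1 - s) * (1 + cp + gL - (cv + gU))) by (apply Rmult_le_pos; lra).
  split; nra.
Qed.

Lemma strip_rho_sublevel x y M : strip_rho L U cp cv x y <= M ->
  cv <= M /\ Rabs x <= U * exp M.
Proof.
  intros HM. destruct (strip_rho_ge x y) as [_ Hge].
  pose proof (log_weight_ge0 U HU0 x).
  split; [lra | apply log_weight_le_inv; lra].
Qed.

Lemma strip_rho_dy_support x : exists y0 y1,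
  L < y0 /\ y0 <= y1 /\ y1 < U /\
  forall y, L < y < U -> (y < y0 \/ y1 < y) -> dy (strip_rho L U cp cv) x y = 0.
Proof.
  exists (L + (U - L) / 3), (L + 2 * (U - L) / 3). do 3 (split; [lra|]).
  intros y _ Hout. rewrite dy_strip_rho.
  assert (Hy : a * y + b < 0 \/ 1 < a * y + b) by (rewrite step_arg; destruct Hout; nra).
  destruct (Derive_step_outside _ Hy) as [-> _]. ring.
Qed.

Let Rabs_A2_le x : Rabs (A2 x) <= 1 + ln (q * q).
Proof.
  pose proof (log_weight_sub_scale L q x HL Hq). rewrite <- HU in *.
  unfold A2. apply Rabs_le. lra.
Qed.

Let y_mul_a_le y : 0 < y <= U -> 0 <= y * a <= 3 * q / (q - 1).
Proof.
  intros Hy. split; [apply Rmult_le_pos; lra|].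
  apply Rle_trans with (U * a); [apply Rmult_le_compat_r; lra|].
  right. unfold a. rewrite HU. field. split; lra.
Qed.

Lemma Rabs_dx_strip_rho_le x y : Rabs (dx (strip_rho L U cp cv) x y) <= / L.
Proof.
  rewrite dx_strip_rho. pose proof (step_range (a * y + b)) as Hs.
  unfold step_between; fold a b. set (s := step (a * y + b)) in *.
  pose proof (Rabs_dlog_weight_le L HL x) as HdL; pose proof (Rabs_dlog_weight_le U HU0 x) as HdU.
  apply Rabs_le_between in HdL; apply Rabs_le_between in HdU.
  assert (/ U <= / L) by (apply Rinv_le_contravar; lra).
  apply Rabs_le. split; nra.
Qed.

Lemma Rabs_dxx_strip_rho_le x y : Rabs (dx (dx (strip_rho L U cp cv)) x y) <= 2 / (L * L).
Proof.
  rewrite dxx_strip_rho. pose proof (step_range (a * y + b)) as Hs.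
  unfold step_between; fold a b. set (s := step (a * y + b)) in *.
  pose proof (Rabs_d2log_weight_le L HL x) as HdL.
  pose proof (Rabs_d2log_weight_le U HU0 x) as HdU.
  apply Rabs_le_between in HdL; apply Rabs_le_between in HdU.
  assert (2 / (U * U) <= 2 / (L * L))
    by (apply Rmult_le_compat_l; [lra | apply Rinv_le_contravar; nra]).
  apply Rabs_le. split; nra.
Qed.

Variables M1 M2 : R.
Hypothesis HM : forall t, Rabs (Derive step t) <= M1 /\ Rabs (Derive (Derive step) t) <= M2.

Lemma y_mul_Rabs_dy_strip_rho_le x y : L < y < U ->
  y * Rabs (dy (strip_rho L U cp cv) x y) <= (1 + ln (q * q)) * M1 * (3 * q / (q - 1)).
Proof.
  intros Hy. rewrite dy_strip_rho, !Rabs_mult, (Rabs_right a) by lra.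
  pose proof (y_mul_a_le y ltac:(lra)). pose proof (Rabs_A2_le x).
  destruct (HM (a * y + b)) as [H1 _].
  replace (y * (Rabs (A2 x) * (a * Rabs (Derive step (a * y + b)))))
    with (Rabs (A2 x) * Rabs (Derive step (a * y + b)) * (y * a)) by ring.
  apply Rmult_le_compat; try lra; [apply Rmult_le_pos; apply Rabs_pos|].
  apply Rmult_le_compat; auto using Rabs_pos.
Qed.

Lemma y2_mul_Rabs_dyy_strip_rho_le x y : L < y < U ->
  y ^ 2 * Rabs (dy (dy (strip_rho L U cp cv)) x y)
  <= (1 + ln (q * q)) * M2 * (3 * q / (q - 1)) ^ 2.
Proof.
  intros Hy. rewrite dyy_strip_rho, !Rabs_mult, (Rabs_right a) by lra.
  pose proof (y_mul_a_le y ltac:(lra)). pose proof (Rabs_A2_le x).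
  destruct (HM (a * y + b)) as [_ H2].
  replace (y ^ 2 * (Rabs (A2 x) * (a * (a * Rabs (Derive (Derive step) (a * y + b))))))
    with (Rabs (A2 x) * Rabs (Derive (Derive step) (a * y + b)) * (y * a) ^ 2) by ring.
  apply Rmult_le_compat; [apply Rmult_le_pos; apply Rabs_pos | apply pow2_ge_0 | |].
  - apply Rmult_le_compat; auto using Rabs_pos.
  - apply pow_incr; lra.
Qed.

Lemma strip_rho_grad_le x y : L < y < U ->
  y * sqrt (Rsqr (dx (strip_rho L U cp cv) x y) + Rsqr (dy (strip_rho L U cp cv) x y))
  <= q + (1 + ln (q * q)) * M1 * (3 * q / (q - 1)).
Proof.
  intros Hy. pose proof (y_mul_Rabs_dy_strip_rho_le x y Hy) as Hdy.
  pose proof (Rabs_dx_strip_rho_le x y) as Hdx.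
  set (u := dx (strip_rho L U cp cv) x y) in *; set (v := dy (strip_rho L U cp cv) x y) in *.
  assert (Hsqrt : sqrt (Rsqr u + Rsqr v) <= Rabs u + Rabs v).
  { pose proof (Rabs_pos u); pose proof (Rabs_pos v).
    rewrite <- (sqrt_Rsqr (Rabs u + Rabs v)) by lra. apply sqrt_le_1_alt.
    rewrite (Rsqr_abs u), (Rsqr_abs v). unfold Rsqr. nra. }
  assert (Hxu : y * Rabs u <= q).
  { apply Rle_trans with (U * / L); [apply Rmult_le_compat; auto using Rabs_pos; lra|].
    right. rewrite HU. field. lra. }
  apply Rle_trans with (y * (Rabs u + Rabs v)); [apply Rmult_le_compat_l; lra | lra].
Qed.

Lemma strip_rho_generator_le alpha x y : L < y < U ->
  Rabs (y ^ 2 * (dx (dx (strip_rho L U cp cv)) x y + dy (dy (strip_rho L U cp cv)) x y)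
        + alpha * y * dy (strip_rho L U cp cv) x y)
  <= 2 * q ^ 2 + (1 + ln (q * q)) * M2 * (3 * q / (q - 1)) ^ 2
     + Rabs alpha * ((1 + ln (q * q)) * M1 * (3 * q / (q - 1))).
Proof.
  intros Hy. pose proof (y_mul_Rabs_dy_strip_rho_le x y Hy) as Hdy.
  pose proof (y2_mul_Rabs_dyy_strip_rho_le x y Hy) as Hdyy.
  pose proof (Rabs_dxx_strip_rho_le x y) as Hdxx.
  set (uxx := dx (dx (strip_rho L U cp cv)) x y) in *.
  set (uyy := dy (dy (strip_rho L U cp cv)) x y) in *.
  set (uy := dy (strip_rho L U cp cv) x y) in *.
  assert (Hxx : y ^ 2 * Rabs uxx <= 2 * q ^ 2).
  { apply Rle_trans with (U ^ 2 * (2 / (L * L))).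
    - apply Rmult_le_compat; auto using Rabs_pos, pow2_ge_0. apply pow_incr; lra.
    - right. rewrite HU. field. lra. }
  eapply Rle_trans; [apply Rabs_triang|].
  rewrite !Rabs_mult, (Rabs_right y), (Rabs_right (y ^ 2)) by (lra || apply Rle_ge, pow2_ge_0).
  assert (y ^ 2 * Rabs (uxx + uyy) <= y ^ 2 * Rabs uxx + y ^ 2 * Rabs uyy)
    by (rewrite <- Rmult_plus_distr_l;
        apply Rmult_le_compat_l; [apply pow2_ge_0 | apply Rabs_triang]).
  assert (Rabs alpha * (y * Rabs uy) <= Rabs alpha * ((1 + ln (q * q)) * M1 * (3 * q / (q - 1))))
    by (apply Rmult_le_compat_l; auto using Rabs_pos).
  nra.
Qed.

End Strip.

(** * Distance in the tree *)

Section TreeDistance.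
Variables (V : Type) (pred : V -> V).

Fixpoint descendants (children : V -> list V) (m : nat) (u : V) : list V :=
  match m with
  | O => u :: nil
  | S m => flat_map children (descendants children m u)
  end.

Lemma In_descendants children : (forall v, In v (children (pred v))) ->
  forall m v, In v (descendants children m (Nat.iter m pred v)).
Proof.
  intros Hch. induction m as [|m IH]; intros v; [left; reflexivity|].
  rewrite Nat.iter_succ_r. apply in_flat_map. exists (pred v); auto.
Qed.

Lemma finite_common_ancestor children o N : (forall v, In v (children (pred v))) ->
  exists F : list V, forall v m n, (m <= N)%nat -> (n <= N)%nat ->
    Nat.iter m pred v = Nat.iter n pred o -> In v F.
Proof.
  intros Hch.
  exists (flat_map (fun n => flat_map (fun m => descendants children m (Nat.iter n pred o))
                                     (seq 0 (S N))) (seq 0 (S N))).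
  intros v m n Hm Hn E. apply in_flat_map. exists n. split; [apply in_seq; lia|].
  apply in_flat_map. exists m. split; [apply in_seq; lia|].
  rewrite <- E. apply In_descendants, Hch.
Qed.

(* [c v] is the graph distance from [v] to a base vertex: the least [m + n]
   such that the [m]-th ancestor of [v] is the [n]-th ancestor of the base. *)
Lemma tree_distance p h : is_homtree_with_end p V pred h ->
  exists c : V -> R, (forall v, 0 <= c v) /\ (forall v, c v - 1 <= c (pred v) <= c v + 1) /\
    (forall M, exists F : list V, forall v, c v <= M -> In v F).
Proof.
  intros [_ [Hchildren Hconn]].
  destruct (classic (exists o : V, True)) as [[o _] | Hempty].
  2: { exists (fun _ => 0). split; [intros; lra | split; [intros; lra|]].
       intros M; exists nil; intros v; exfalso; apply Hempty; exists v; auto. }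
  set (children v := proj1_sig (constructive_indefinite_description _ (Hchildren v))).
  assert (Hch : forall v, In v (children (pred v))).
  { intros v. unfold children. destruct (constructive_indefinite_description _ _) as [l Hl].
    apply Hl; reflexivity. }
  set (link v k := exists m n : nat, (m + n = k)%nat /\ Nat.iter m pred v = Nat.iter n pred o).
  assert (Hlink : forall v, exists k, link v k).
  { intros v. destruct (Hconn v o) as [m [n E]]. exists (m + n)%nat, m, n; auto. }
  set (d v := proj1_sig (epsilon_smallest (link v) (fun k => excluded_middle_informative _)
                                          (Hlink v))).
  assert (Hd : forall v, link v (d v) /\ forall k, link v k -> (d v <= k)%nat).
  { intros v. unfold d. destruct (epsilon_smallest _ _ _) as [k Hk]. exact Hk. }
  exists (fun v => INR (d v)). split; [intros; apply pos_INR | split].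
  - intros v. destruct (Hd v) as [[m [n [Emn E]]] Hmin].
    destruct (Hd (pred v)) as [[m' [n' [Emn' E']]] Hmin'].
    assert (Hup : (d v <= d (pred v) + 1)%nat).
    { apply Hmin. exists (S m'), n'. rewrite Nat.iter_succ_r. split; [lia | exact E']. }
    assert (Hdown : (d (pred v) <= d v + 1)%nat).
    { destruct m as [|m].
      - apply Hmin'. exists 0%nat, (S n). split; [lia|].
        simpl in E |- *. rewrite E. reflexivity.
      - apply Nat.le_trans with (m + n)%nat; [|lia]. apply Hmin'.
        exists m, n. rewrite Nat.iter_succ_r in E. split; [lia | exact E]. }
    apply le_INR in Hup; apply le_INR in Hdown. rewrite plus_INR in Hup, Hdown. simpl in *. lra.
  - intros M. destruct (finite_common_ancestor children o (Z.to_nat (up M)) Hch) as [F HF].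
    exists F. intros v Hv. destruct (Hd v) as [[m [n [Emn E]]] _].
    assert (HN : (d v <= Z.to_nat (up M))%nat).
    { destruct (archimed M) as [Hup _].
      assert (Hlt : IZR (Z.of_nat (d v)) < IZR (up M)) by (rewrite <- INR_IZR_INZ; lra).
      apply lt_IZR in Hlt. lia. }
    apply (HF v m n); [lia | lia | exact E].
Qed.

End TreeDistance.

(** * Gluing the strips *)

Lemma strip_rho_glue q L U W cp cv cw x : 1 < q -> 0 < L -> U = q * L -> W = q * U ->
  strip_rho L U cp cv x U = strip_rho U W cv cw x U.
Proof.
  intros Hq HL HU HW. rewrite (strip_rho_top q), (strip_rho_bottom q); auto. subst U; nra.
Qed.

Lemma powerRZ_pred_mult q k : 0 < q -> powerRZ q k = q * powerRZ q (k - 1).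
Proof.
  intros Hq. replace k with ((k - 1) + 1)%Z at 1 by ring.
  rewrite powerRZ_add by lra. simpl. ring.
Qed.

Lemma list_upper_bound {T : Type} (f : T -> R) (l : list T) :
  exists K, forall v, In v l -> f v <= K.
Proof.
  induction l as [|u l [K HK]]; [exists 0; intros v []|].
  exists (Rmax (f u) K). intros v [<- | Hv]; [apply Rmax_l|].
  eapply Rle_trans; [apply HK, Hv | apply Rmax_r].
Qed.

Definition tree_rho (q : R) (V : Type) (pred : V -> V) (h : V -> Z) (c : V -> R)
  (v : V) : R -> R -> R :=
  strip_rho (powerRZ q (h v - 1)) (powerRZ q (h v)) (c (pred v)) (c v).

Section TreeRho.
Variables (q : R) (V : Type) (pred : V -> V) (h : V -> Z) (c : V -> R).
Hypotheses (Hq : 1 < q) (Hh : forall v, h (pred v) = (h v - 1)%Z).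
Hypotheses (Hc0 : forall v, 0 <= c v) (Hc1 : forall v, c v - 1 <= c (pred v) <= c v + 1).

Let HL v : 0 < powerRZ q (h v - 1).
Proof. apply powerRZ_lt; lra. Qed.

Let HU v : powerRZ q (h v) = q * powerRZ q (h v - 1).
Proof. apply powerRZ_pred_mult; lra. Qed.

Lemma tree_rho_pos v x y : 0 < tree_rho q V pred h c v x y.
Proof.
  unfold tree_rho.
  destruct (strip_rho_ge q _ _ _ _ Hq (HL v) (HU v) (Hc0 _) (Hc0 _) (Hc1 v) x y); lra.
Qed.

Lemma HT_continuous_tree_rho : HT_continuous V pred h q (tree_rho q V pred h c).
Proof.
  split.
  - intros w x. unfold tree_rho.
    replace (h w - 1)%Z with (h (pred w)) by (rewrite Hh; ring).
    apply (strip_rho_glue q); auto. rewrite Hh. apply HU.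
  - intros v x y _ eps Heps.
    destruct (continuity_2d_pt_strip_rho q _ _ (c (pred v)) (c v) Hq (HL v) (HU v) x y
                (mkposreal eps Heps)) as [delta Hdelta].
    exists delta; split; [apply cond_pos | intros; apply Hdelta; auto].
Qed.

Lemma HT_smooth_tree_rho : HT_smooth V pred h q (tree_rho q V pred h c).
Proof.
  split; [exact HT_continuous_tree_rho|]. intros v w.
  destruct (Dw_strip_rho_regular q _ _ (c (pred v)) (c v) Hq (HL v) (HU v) w)
    as [Hreg Hbound].
  split; [intros x y _; apply Hreg|]. intros Rb.
  destruct (Hbound (- Rb) Rb (powerRZ q (h v - 1)) (powerRZ q (h v))) as [B HB].
  exists B. intros x y Hy Hx.
  apply HB; [apply Rabs_le_between, Hx | unfold in_ostrip in Hy; lra].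
Qed.

Lemma tree_rho_dy_support v x : exists a b : R,
  powerRZ q (h v - 1) < a /\ a <= b /\ b < powerRZ q (h v) /\
  forall y, in_ostrip q (h v) y -> (y < a \/ b < y) -> dy (tree_rho q V pred h c v) x y = 0.
Proof. apply (strip_rho_dy_support q); auto. Qed.

Lemma HT_tends_to_infinity_tree_rho :
  (forall M, exists F : list V, forall v, c v <= M -> In v F) ->
  HT_tends_to_infinity V h q (tree_rho q V pred h c).
Proof.
  intros Hcfin M. destruct (Hcfin M) as [F HF].
  destruct (list_upper_bound (fun v => powerRZ q (h v)) F) as [K HK].
  exists F, (Rabs K * exp M). intros v x y _ Hle.
  destruct (strip_rho_sublevel q _ _ _ _ Hq (HL v) (HU v) (Hc0 _) (Hc0 _) (Hc1 v) x y M Hle)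
    as [HcM HxM].
  split; [apply HF, HcM|].
  eapply Rle_trans; [apply HxM | apply Rmult_le_compat_r; [left; apply exp_pos|]].
  eapply Rle_trans; [apply HK, HF, HcM | apply Rle_abs].
Qed.

Lemma tree_rho_grad_bounded : exists B, forall v x y, in_ostrip q (h v) y ->
  y * sqrt (Rsqr (dx (tree_rho q V pred h c v) x y) + Rsqr (dy (tree_rho q V pred h c v) x y))
  <= B.
Proof.
  destruct step_Derive_bounded as [M1 [M2 HM]]. eexists. intros v x y Hy.
  apply (strip_rho_grad_le q _ _ _ _ Hq (HL v) (HU v) (Hc1 v) M1 M2 HM x y Hy).
Qed.

Lemma tree_rho_generator_bounded alpha : exists B, forall v x y, in_ostrip q (h v) y ->
  Rabs (y ^ 2 * (dx (dx (tree_rho q V pred h c v)) x y + dy (dy (tree_rho q V pred h c v)) x y)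
        + alpha * y * dy (tree_rho q V pred h c v) x y) <= B.
Proof.
  destruct step_Derive_bounded as [M1 [M2 HM]]. eexists. intros v x y Hy.
  apply (strip_rho_generator_le q _ _ _ _ Hq (HL v) (HU v) (Hc1 v) M1 M2 HM alpha x y Hy).
Qed.

End TreeRho.

Theorem proposition8p3 :
  forall (p : nat) (q alpha : R) (V : Type) (pred : V -> V) (h : V -> Z),
    (1 <= p)%nat -> 1 < q -> is_homtree_with_end p V pred h ->
    exists rho0 : V -> R -> R -> R,
      (* continuous, values in (0, oo) *)
      (forall v x y, in_strip q (h v) y -> 0 < rho0 v x y) /\
      HT_continuous V pred h q rho0 /\
      HT_smooth V pred h q rho0 /\
      (* y |-> d_y rho0 (x+iy, v) has compact support in (q^(h v - 1), q^(h v)) *)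
      (forall v x, exists a b : R,
          powerRZ q (h v - 1) < a /\ a <= b /\ b < powerRZ q (h v) /\
          forall y, in_ostrip q (h v) y -> (y < a \/ b < y) ->
            dy (rho0 v) x y = 0) /\
      HT_tends_to_infinity V h q rho0 /\
      (* |grad rho0| bounded on HT^o *)
      (exists B : R, forall v x y, in_ostrip q (h v) y ->
          y * sqrt (Rsqr (dx (rho0 v) x y) + Rsqr (dy (rho0 v) x y)) <= B) /\
      (* |A_alpha rho0| bounded on HT^o *)
      (exists B : R, forall v x y, in_ostrip q (h v) y ->
          Rabs (y ^ 2 * (dx (dx (rho0 v)) x y + dy (dy (rho0 v)) x y)
                + alpha * y * dy (rho0 v) x y) <= B).
Proof.
  intros p q alpha V pred h _ Hq Htree.
  pose proof Htree as [Hh _].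
  destruct (tree_distance V pred p h Htree) as [c [Hc0 [Hc1 Hcfin]]].
  exists (tree_rho q V pred h c).
  split; [intros; apply tree_rho_pos; auto|].
  split; [apply HT_continuous_tree_rho; auto|].
  split; [apply HT_smooth_tree_rho; auto|].
  split; [intros; apply tree_rho_dy_support; auto|].
  split; [apply HT_tends_to_infinity_tree_rho; auto|].
  split; [apply tree_rho_grad_bounded; auto | apply tree_rho_generator_bounded; auto].
Qed.
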